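(* Let $\mathcal{M}\subseteq\mathcal{M}_1$ and $\mathbb{P}\in\mathcal{M}$. Let $\alpha$ be of the form $\alpha(Q)=\widetilde\alpha(Q)$ for $Q\in\mathcal{Q}^{\mathbb{P}}$, $\alpha(Q)=+\infty$ for $Q\in\mathcal{M}_1\setminus\mathcal{Q}^{\mathbb{P}}$, where $\mathcal{Q}^{\mathbb{P}}$ is a weak-$*$-closed subset of $\mathcal{P}^{\mathbb{P}}$, $\widetilde\alpha<\infty$ on $\mathcal{Q}^{\mathbb{P}}$ and $\inf_{\mathcal{Q}^{\mathbb{P}}}\widetilde\alpha>-\infty$. Then for all $X\in\mathcal{X}^{\mathcal{M}}\cap L^\infty(\mathbb{P})$, $\widehat\rho^{\mathcal{M}}(X)=\widehat\rho^{\mathbb{P}}(X)=\rho^{\mathbb{P}}(X)$.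
   Context: $(\Omega,\mathcal{F})$ is a measurable space, $\mathcal{M}_1$ the set of probability measures on it with the topology of weak (weak-$*$) convergence, $\mathcal{X}$ the space of pointwise bounded $\mathcal{F}$-measurable real functions, $L^\infty(P)=L^\infty(\Omega,\mathcal{F},P)$, $\mathcal{P}^P=\{Q\in\mathcal{M}_1:Q\ll P\}$. With $\alpha$ as in the claim, $\rho(X)=\sup_{Q\in\mathcal{M}_1}\{\mathbb{E}_Q[-X]-\alpha(Q)\}$ on $\mathcal{X}$ (assumed real-valued). For $P\in\mathcal{M}_1$, $X\in L^\infty(P)$: $\rho^P(X)=\inf_{\{\widetilde X\in\mathcal{X}:P(\widetilde X=X)=1\}}\rho(\widetilde X)$ and $\widehat\rho^P(X)=\sup_{Q\in\mathcal{P}^P}\{\mathbb{E}_Q[-X]-\alpha(Q)\}$. $\mathcal{X}^{\mathcal{M}}=\bigcap_{P\in\mathcal{M}}L^\infty(P)$ and $\widehat\rho^{\mathcal{M}}(X)=\sup_{P\in\mathcal{M}}\widehat\rho^P(X)$. *)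

From HB Require Import structures.
From mathcomp Require Import all_boot all_order all_algebra.
From mathcomp Require Import all_classical all_reals all_analysis.
Set Implicit Arguments. Unset Strict Implicit. Unset Printing Implicit Defensive.
Import Order.TTheory GRing.Theory Num.Theory.
Local Open Scope classical_set_scope.
Local Open Scope ring_scope.
Local Open Scope ereal_scope.

Section Defs.
Context {d : measure_display} {T : measurableType d} {R : realType}.

(* M_1 is the type [probability T R]. *)

Definition bdd_meas (X : T -> R) : Prop :=
  measurable_fun setT X /\ exists c : R, forall w, (`|X w| <= c)%R.

(* L^∞(P), realised as the set of measurable functions that are P-a.s. bounded
   (representatives rather than equivalence classes). *)
Definition Linf (P : probability T R) (X : T -> R) : Prop :=
  measurable_fun setT X /\ exists c : R, {ae P, forall w, (`|X w| <= c)%R}.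

Definition XM (M : set (probability T R)) (X : T -> R) : Prop :=
  forall P, M P -> Linf P X.

Definition Pabs (P : probability T R) : set (probability T R) :=
  [set Q | Q `<< P].

Definition expneg (Q : probability T R) (X : T -> R) : \bar R :=
  \int[Q]_w (- X w)%:E.

Definition rho (alpha : probability T R -> \bar R) (X : T -> R) : \bar R :=
  ereal_sup [set expneg Q X - alpha Q | Q in [set: probability T R]].

Definition rhoP (alpha : probability T R -> \bar R) (P : probability T R)
  (X : T -> R) : \bar R :=
  ereal_inf [set rho alpha Xt |
    Xt in [set Xt | bdd_meas Xt /\ P [set w | Xt w = X w] = 1]].

Definition rhohat (alpha : probability T R -> \bar R) (P : probability T R)
  (X : T -> R) : \bar R :=
  ereal_sup [set expneg Q X - alpha Q | Q in Pabs P].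

Definition rhohatM (alpha : probability T R -> \bar R)
  (M : set (probability T R)) (X : T -> R) : \bar R :=
  ereal_sup [set rhohat alpha P X | P in M].

(* Weak(-* ) topology on M_1: the coarsest topology making
   Q ↦ E_Q[f] continuous for every f ∈ 𝒳. *)
Definition weak_closed (C : set (probability T R)) : Prop :=
  forall Q0 : probability T R, ~ C Q0 ->
    exists (fs : seq (T -> R)) (eps : R),
      (0 < eps)%R /\ (forall f, f \in fs -> bdd_meas f) /\
      forall Q : probability T R,
        (forall f, f \in fs ->
           `| \int[Q]_w (f w)%:E - \int[Q0]_w (f w)%:E | < eps%:E) ->
        ~ C Q.

End Defs.

(* Since alpha is +oo outside QP and QP consists of P-absolutely continuous
   measures, every penalised supremum defining rho, rhohat^P' or rhohat^P is
   in fact a supremum over QP.  Hence rhohat^P X = rho X bounds every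
   rhohat^P' X, which gives the first equality as P is in M.  For the second,
   each Q in QP is blind to P-null sets, so rho takes the value rho X on every
   bounded P-version of X, and such versions exist (truncate X at its
   essential bound). *)
From HB Require Import structures.
From mathcomp Require Import all_boot all_order all_algebra.
From mathcomp Require Import all_classical all_reals all_analysis.
From mathcomp Require Import measurable_realfun.
Import Order.TTheory GRing.Theory Num.Theory.
Local Open Scope classical_set_scope.
Local Open Scope ring_scope.
Local Open Scope ereal_scope.

Lemma ereal_sup_penalty_restrict (R : realType) (U : Type)
    (f alpha : U -> \bar R) (S A : set U) :
  S `<=` A -> (forall u, ~ S u -> alpha u = +oo) ->
  ereal_sup [set f u - alpha u | u in A] = ereal_sup [set f u - alpha u | u in S].
Proof.
move=> SA alpha_out; apply/eqP; rewrite eq_le; apply/andP; split.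
- apply: ge_ereal_sup => _ [u Au <-].
  have [Su|nSu] := pselect (S u); first by apply: ereal_sup_ubound; exists u.
  by rewrite alpha_out // addeNy leNye.
- exact/ereal_sup_le/image_subset.
Qed.

Section Versions.
Context {d : measure_display} {T : measurableType d} {R : realType}.

Lemma measurable_eqr {X Y : T -> R} :
  measurable_fun setT X -> measurable_fun setT Y ->
  measurable [set w | X w = Y w].
Proof.
move=> mX mY; have := measurable_fun_eqr mX mY measurableT (Y := [set true]) I.
rewrite setTI; congr measurable; apply/seteqP; split => w /=; first by move/eqP.
by move=> ->; rewrite eqxx.
Qed.

Lemma expneg_abs_cont {P Q : probability T R} {X Y : T -> R} :
  Q `<< P -> measurable_fun setT X -> measurable_fun setT Y ->
  P [set w | Y w = X w] = 1 -> expneg Q Y = expneg Q X.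
Proof.
move=> QP mX mY PYX; have mYX := measurable_eqr mY mX.
apply: ae_eq_integral => //; try exact/measurable_EFinP/measurable_funN.
apply: (null_dominates_ae_eq measurableT QP).
exists (~` [set w | Y w = X w]); split; first exact: measurableC.
- by have := probability_setC P mYX; rewrite PYX subee.
- by move=> w /= neq YX; apply: neq => _; rewrite YX.
Qed.

Lemma Linf_bounded_version {P : probability T R} {X : T -> R} :
  Linf P X -> exists2 Xt, bdd_meas Xt & P [set w | Xt w = X w] = 1.
Proof.
case=> mX [c [N [mN PN0 XN]]].
pose Xt w := Num.max (- c)%R (Num.min c (X w)).
have mXt : measurable_fun setT Xt.
  apply: measurable_maxr; first exact: measurable_cst.
  exact: measurable_minr (measurable_cst _) mX.
have mXtX := measurable_eqr mXt mX.
exists Xt.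
  split => //; exists `|c|%R => w; rewrite ler_norml; apply/andP; split.
    by rewrite le_max lerN2 ler_norm.
  by rewrite ge_max ge_min ler_normr lexx orbT ler_norm.
have : P (~` [set w | Xt w = X w]) = 0.
  apply: (subset_measure0 (measurableC mXtX) mN) => // w /= neq.
  apply: XN => /= /ler_normlP[ge_c le_c]; apply: neq.
  by rewrite /Xt (min_r le_c) max_r // lerNl.
by have := probability_setC P (measurableC mXtX); rewrite setCK => -> ->; rewrite sube0.
Qed.

End Versions.

Lemma rhohat_le_rho {d : measure_display} {T : measurableType d} {R : realType}
    (alpha : probability T R -> \bar R) (P : probability T R) (X : T -> R) :
  rhohat alpha P X <= rho alpha X.
Proof. exact/ereal_sup_le/image_subset. Qed.

Section PenaltySupportedOnQP.
Context {d : measure_display} {T : measurableType d} {R : realType}.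
Context {P : probability T R} {QP : set (probability T R)}.
Context {alpha : probability T R -> \bar R}.
Hypothesis QP_abs : QP `<=` Pabs P.
Hypothesis alpha_out : forall Q, ~ QP Q -> alpha Q = +oo.

Lemma rho_restrict (X : T -> R) :
  rho alpha X = ereal_sup [set expneg Q X - alpha Q | Q in QP].
Proof. exact: ereal_sup_penalty_restrict. Qed.

Lemma rhohat_restrict (X : T -> R) :
  rhohat alpha P X = ereal_sup [set expneg Q X - alpha Q | Q in QP].
Proof. exact: ereal_sup_penalty_restrict. Qed.

Lemma rho_version (X Xt : T -> R) :
  measurable_fun setT X -> measurable_fun setT Xt ->
  P [set w | Xt w = X w] = 1 -> rho alpha Xt = rho alpha X.
Proof.
move=> mX mXt PXtX; rewrite !rho_restrict; congr ereal_sup.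
by apply: eq_imagel => Q /QP_abs QP_Q; rewrite (expneg_abs_cont QP_Q mX mXt PXtX).
Qed.

Lemma rhohatM_eq_rhohat (M : set (probability T R)) (X : T -> R) :
  M P -> rhohatM alpha M X = rhohat alpha P X.
Proof.
move=> MP; apply/eqP; rewrite eq_le; apply/andP; split.
- apply: ge_ereal_sup => _ [P' _ <-].
  by rewrite rhohat_restrict -rho_restrict rhohat_le_rho.
- by apply: ereal_sup_ubound; exists P.
Qed.

Lemma rhoP_eq_rhohat (X : T -> R) :
  Linf P X -> rhoP alpha P X = rhohat alpha P X.
Proof.
move=> LX; have mX : measurable_fun setT X by case: LX.
have [Xt bXt PXtX] := Linf_bounded_version LX.
rewrite rhohat_restrict -rho_restrict -[RHS]ereal_inf1; congr ereal_inf.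
apply/seteqP; split=> r.
- by case=> Y [[mY _] PYX] <-; exact: rho_version.
- by move=> ->; exists Xt => //; apply: rho_version => //; case: bXt.
Qed.

End PenaltySupportedOnQP.

Theorem corollary5p9 (d : measure_display) (T : measurableType d) (R : realType)
  (M : set (probability T R)) (P : probability T R)
  (QP : set (probability T R)) (alpha : probability T R -> \bar R) :
  M P ->
  QP `<=` Pabs P ->
  weak_closed QP ->
  (forall Q, QP Q -> alpha Q < +oo) ->
  (forall Q, ~ QP Q -> alpha Q = +oo) ->
  -oo < ereal_inf (alpha @` QP) ->
  (forall X : T -> R, bdd_meas X -> rho alpha X \is a fin_num) ->
  forall X : T -> R, XM M X -> Linf P X ->
    rhohatM alpha M X = rhohat alpha P X /\ rhohat alpha P X = rhoP alpha P X.
Proof.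
move=> MP QP_abs _ _ alpha_out _ _ X _ LX; split.
- exact: rhohatM_eq_rhohat QP_abs alpha_out M X MP.
- by rewrite (rhoP_eq_rhohat QP_abs alpha_out X LX).
Qed.
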